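(* Let $T$ be an $spo$-tableau and $x_1,x_2\in B_0$ with $x_1\le x_2$. Suppose that neither the insertion of $x_1$ into $T$ nor the insertion of $x_2$ into $U=T\leftarrow x_1$ causes a cancellation. Let $S_1$ be the new box of $U$ (not in the shape of $T$) and $S_2$ the new box of $U\leftarrow x_2$ (not in the shape of $U$). Then $S_2$ lies in a column strictly to the right of $S_1$ and in a row weakly above $S_1$.
   Context: Fix positive integers $m,n$. Let $B_0=\{1,\bar1,2,\bar2,\dots,m,\bar m\}$, $B_1=\{1^\circ,\dots,n^\circ\}$, $B=B_0\cup B_1$, totally ordered by $1<\bar1<2<\bar2<\cdots<m<\bar m<1^\circ<\cdots<n^\circ$. Rows are numbered from the top starting at 1, columns from the left. An $spo$-tableau of shape $\lambda$ is a filling of the Young diagram of $\lambda$ with entries of $B$ such that (i) the boxes containing entries of $B_0$ form a Young diagram $\sigma\subseteq\lambda$, and this part is weakly increasing along rows, strictly increasing down columns, and every entry in row $i$ is $\ge i$; (ii) the entries of $B_1$ (filling $\lambda/\sigma$) are strictly increasing along rows and weakly increasing down columns. $spo$-insertion: a forward jeu de taquin slide on an empty box with right neighbour $a$ and lower neighbour $b$ moves $a$ left into the empty box if $a<b$ or ($a=b\in B_1$), and moves $b$ up into the empty box if $b<a$ or ($a=b\in B_0$); if only one neighbour exists it moves in; slides are repeated until the empty box has no right or lower neighbour, and then that box is deleted. Inserting $z\in B_0$ into row $r$: if no entry of the row exceeds $z$, append $z$ in a new box at the end of the row; otherwise let $w$ be the least entry of the row with $w>z$; if $z=r$ (unbarred)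 and $w=\bar r$, delete $\bar r$ leaving an empty box (a cancellation); otherwise replace $w$ by $z$, displacing $w$. Inserting $z\in B_1$ into column $c$: if no entry of the column exceeds $z$, append $z$ in a new box at the bottom; otherwise replace the least entry $w>z$ of the column by $z$, displacing $w$. To insert $x\in B_0$ into $T$ (result $T\leftarrow x$) start by inserting $x$ into row 1; to insert $x\in B_1$ (result $x\rightarrow T$) start by inserting $x$ into column 1. Whenever an entry $w$ is displaced from a box in row $r$, column $c$: if $w\in B_0$ insert it into row $r+1$; if $w\in B_1$ insert it into column $c+1$. The process ends when an entry is placed in a new box, or when a cancellation occurs, in which case the empty box is moved to an outer corner by forward slides and deleted. If no cancellation occurs the result has exactly one new box. *)

From mathcomp Require Import all_boot.
Set Implicit Arguments. Unset Strict Implicit. Unset Printing Implicit Defensive.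

(* Letters of B.  inl (i, false) = i, inl (i, true) = \bar i  (elements of B_0);
   inr j = j^circ (elements of B_1). *)
Definition letter := ((nat * bool) + nat)%type.

Definition isB0 (x : letter) : bool := if x is inl _ then true else false.

Definition leB (x y : letter) : bool :=
  match x, y with
  | inl (i, b), inl (j, c) => (i < j) || ((i == j) && (b <= c))
  | inl _, inr _ => true
  | inr _, inl _ => false
  | inr i, inr j => i <= j
  end.
Definition ltB (x y : letter) : bool := leB x y && (x != y).

Definition valid_letter (m n : nat) (x : letter) : bool :=
  match x with
  | inl (i, _) => (1 <= i <= m)
  | inr j => (1 <= j <= n)
  end.

(* A filling: list of rows from the top (row index 0 = paper's row 1),
   each row listed from the left (column index 0 = paper's column 1). *)
Definition tableau := seq (seq letter).
Definition dummy : letter := inr 0.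
Definition entry (T : tableau) (r c : nat) : letter := nth dummy (nth [::] T r) c.
Definition in_shape (T : tableau) (r c : nat) : bool := c < size (nth [::] T r).
Definition set_entry (T : tableau) (r c : nat) (x : letter) : tableau :=
  set_nth [::] T r (set_nth dummy (nth [::] T r) c x).

Definition spo_tableau (m n : nat) (T : tableau) : Prop :=
  (forall r, r < size T -> 0 < size (nth [::] T r)) /\
  (forall r, size (nth [::] T r.+1) <= size (nth [::] T r)) /\
  (forall r c, in_shape T r c -> valid_letter m n (entry T r c)) /\
  (* the B_0-boxes form a Young diagram sigma inside lambda *)
  (forall r c, in_shape T r c.+1 -> isB0 (entry T r c.+1) -> isB0 (entry T r c)) /\
  (forall r c, in_shape T r.+1 c -> isB0 (entry T r.+1 c) -> isB0 (entry T r c)) /\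
  (forall r c, in_shape T r c.+1 -> isB0 (entry T r c.+1) ->
     leB (entry T r c) (entry T r c.+1)) /\
  (forall r c, in_shape T r.+1 c -> isB0 (entry T r.+1 c) ->
     ltB (entry T r c) (entry T r.+1 c)) /\
  (forall r c, in_shape T r c -> isB0 (entry T r c) ->
     leB (inl (r.+1, false)) (entry T r c)) /\
  (forall r c, in_shape T r c.+1 -> isB0 (entry T r c) = false ->
     ltB (entry T r c) (entry T r c.+1)) /\
  (forall r c, in_shape T r.+1 c -> isB0 (entry T r c) = false ->
     leB (entry T r c) (entry T r.+1 c)).

(* Forward jeu de taquin slides starting from an empty box at (r, c);
   the content of the box at (r, c) is ignored (it is the empty box). *)
Fixpoint jdt (fuel : nat) (T : tableau) (r c : nat) : option tableau :=
  match fuel with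
  | 0 => None
  | fuel'.+1 =>
    let right := in_shape T r c.+1 in
    let below := in_shape T r.+1 c in
    let a := entry T r c.+1 in
    let b := entry T r.+1 c in
    let move_left := jdt fuel' (set_entry T r c a) r c.+1 in
    let move_up := jdt fuel' (set_entry T r c b) r.+1 c in
    if right then
      if below then
        if ltB a b || ((a == b) && ~~ isB0 a) then move_left else move_up
      else move_left
    else if below then move_up
    else
      Some [seq row <- set_nth [::] T r (take c (nth [::] T r)) | size row != 0]
  end.

Inductive ins_result :=
  | Placed of tableau
  | Cancelled of tableau
  | OutOfFuel.             (* never happens with the fuel used below *)

Inductive target := Row of nat | Col of nat.

Fixpoint ins (fuel : nat) (T : tableau) (z : letter) (t : target) : ins_result :=
  match fuel with
  | 0 => OutOfFuel
  | fuel'.+1 =>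
    match t with
    | Row r =>
      let row := nth [::] T r in
      if has (ltB z) row then
        let c := find (ltB z) row in
        let w := nth dummy row c in
        if (z == inl (r.+1, false)) && (w == inl (r.+1, true)) then
          match jdt fuel' T r c with
          | Some T' => Cancelled T'
          | None => OutOfFuel
          end
        else
          let T' := set_entry T r c z in
          if isB0 w then ins fuel' T' w (Row r.+1) else ins fuel' T' w (Col c.+1)
      else Placed (set_nth [::] T r (rcons row z))
    | Col c =>
      let h := find (fun row => size row <= c) T in
      let col := [seq entry T r c | r <- iota 0 h] in
      if has (ltB z) col then
        let r := find (ltB z) col in
        let w := nth dummy col r in
        let T' := set_entry T r c z in
        if isB0 w then ins fuel' T' w (Row r.+1) else ins fuel' T' w (Col c.+1)
      else Placed (set_nth [::] T h (rcons (nth [::] T h) z))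
    end
  end.

Definition ins_fuel (T : tableau) : nat := (size T + sumn (map size T)).*2 + 4.

Definition row_insert (T : tableau) (x : letter) : ins_result :=
  ins (ins_fuel T) T x (Row 0).
Definition col_insert (x : letter) (T : tableau) : ins_result :=
  ins (ins_fuel T) T x (Col 0).

From mathcomp Require Import all_boot zify.
Set Implicit Arguments. Unset Strict Implicit. Unset Printing Implicit Defensive.

(* Both insertions are followed along their bumping paths.  Inserting x1
   into T bumps B_0 letters in rows 0, ..., k at weakly decreasing columns
   c 0 >= ... >= c k, and may then switch to column insertion, bumping B_1
   letters that strictly increase from column c k + 1 up to the column c1 of
   the new box.  Since x2 >= x1, inserting x2 into U bumps in each row r
   strictly to the right of c r, so its row phase cannot go below row k; and
   in a column j <= c1 its letter stays smaller than the one the first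
   insertion left in column j, so it cannot be placed there.  Hence the second
   new box lies strictly right of column c1, and weakly above row r1. *)

Lemma leB_refl x : leB x x.
Proof. by case: x => [[i b]|i] //=; rewrite eqxx leqnn orbT. Qed.

Lemma leB_trans y x z : leB x y -> leB y z -> leB x z.
Proof.
case: x => [[i b]|i]; case: y => [[j c]|j]; case: z => [[k d]|k] //=;
  try (case: b; case: c; case: d); rewrite /= ?andbT ?andbF ?orbF; lia.
Qed.

Lemma leB_total x y : leB x y || leB y x.
Proof.
case: x => [[i b]|i]; case: y => [[j c]|j] //=;
  try (case: b; case: c); rewrite /= ?andbT ?andbF ?orbF; lia.
Qed.

Lemma leB_anti x y : leB x y -> leB y x -> x = y.
Proof.
case: x => [[i b]|i]; case: y => [[j c]|j] //=;
  try (case: b; case: c); rewrite /= ?andbT ?andbF ?orbF => lexy leyx;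
  try (have -> : i = j by lia); by [|lia].
Qed.

Lemma ltBNge x y : ltB x y = ~~ leB y x.
Proof.
rewrite /ltB; case leyx: (leB y x).
  by case lexy: (leB x y); rewrite //= (leB_anti lexy leyx) eqxx.
have := leB_total x y; rewrite leyx orbF => -> /=.
by apply: contraFneq leyx => ->; rewrite leB_refl.
Qed.

Lemma leBNgt x y : leB x y = ~~ ltB y x.
Proof. by rewrite ltBNge negbK. Qed.

Lemma ltBW x y : ltB x y -> leB x y.
Proof. by case/andP. Qed.

Lemma leB_ltB_trans y x z : leB x y -> ltB y z -> ltB x z.
Proof. by rewrite !ltBNge => lexy; apply: contra => lezx; apply: leB_trans lexy. Qed.

Lemma ltB_leB_trans y x z : ltB x y -> leB y z -> ltB x z.
Proof. by rewrite !ltBNge => ltxy leyz; apply: contra ltxy; apply: leB_trans. Qed.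

Lemma ltB_trans y x z : ltB x y -> ltB y z -> ltB x z.
Proof. by move=> ltxy /ltBW; apply: ltB_leB_trans. Qed.

Lemma isB0_leB x y : leB x y -> isB0 y -> isB0 x.
Proof. by case: x => [[i b]|i]; case: y => [[j c]|j]. Qed.

Lemma isB1_leB x y : leB x y -> ~~ isB0 x -> ~~ isB0 y.
Proof. by case: x => [[i b]|i]; case: y => [[j c]|j]. Qed.

Lemma ltB_B0_B1 x y : isB0 x -> ~~ isB0 y -> ltB x y.
Proof. by case: x => [[i b]|i]; case: y => [[j c]|j]. Qed.

(* Whether two adjacent letters may follow each other along a row (resp. down
   a column) of an spo-tableau.  It suffices to look at the first letter,
   since B_0 letters precede B_1 letters. *)
Definition row_next (a b : letter) : bool := if isB0 a then leB a b else ltB a b.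
Definition col_next (a b : letter) : bool := if isB0 a then ltB a b else leB a b.

Lemma row_next_leB a b : row_next a b -> leB a b.
Proof. by rewrite /row_next; case: isB0 => // /ltBW. Qed.

Lemma col_next_leB a b : col_next a b -> leB a b.
Proof. by rewrite /col_next; case: isB0 => // /ltBW. Qed.

Lemma ltB_row_next a b : ltB a b -> row_next a b.
Proof. by rewrite /row_next; case: isB0 => // /ltBW. Qed.

Lemma ltB_col_next a b : ltB a b -> col_next a b.
Proof. by rewrite /col_next; case: isB0 => // /ltBW. Qed.

Lemma row_next_B0 a b : isB0 b -> leB a b -> row_next a b.
Proof. by move=> Bb leab; rewrite /row_next (isB0_leB leab Bb). Qed.

Lemma col_next_B1 a b : ~~ isB0 b -> leB a b -> col_next a b.
Proof. by rewrite /col_next; case: ifP => // Ba Bb _; apply: ltB_B0_B1. Qed.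

Lemma entry_set T r c x i j :
  entry (set_entry T r c x) i j = if (i == r) && (j == c) then x else entry T i j.
Proof.
rewrite /entry /set_entry nth_set_nth /=; have [-> /=|//] := eqVneq i r.
by rewrite nth_set_nth /=; case: eqP.
Qed.

Lemma size_row_set T r c x i : in_shape T r c ->
  size (nth [::] (set_entry T r c x) i) = size (nth [::] T i).
Proof.
rewrite /in_shape /set_entry nth_set_nth /= => inTrc.
by have [->|//] := eqVneq i r; rewrite size_set_nth; apply/maxn_idPr.
Qed.

Lemma in_shape_set T r c x i j : in_shape T r c ->
  in_shape (set_entry T r c x) i j = in_shape T i j.
Proof. by move=> inTrc; rewrite /in_shape size_row_set. Qed.

Lemma in_shape_size T r c : in_shape T r c -> r < size T.
Proof. by rewrite ltnNge; apply: contraTN => ?; rewrite /in_shape nth_default. Qed.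

Lemma size_set T r c x : in_shape T r c -> size (set_entry T r c x) = size T.
Proof. by move=> /in_shape_size ?; rewrite /set_entry size_set_nth; apply/maxn_idPr. Qed.

Definition add_box (T : tableau) (r : nat) (z : letter) : tableau :=
  set_nth [::] T r (rcons (nth [::] T r) z).

Lemma entry_add_box T r z i j : entry (add_box T r z) i j =
  if (i == r) && (j == size (nth [::] T r)) then z else entry T i j.
Proof.
rewrite /entry /add_box nth_set_nth /=; have [-> /=|//] := eqVneq i r.
rewrite nth_rcons; have [->|ne] := eqVneq j (size (nth [::] T r)); first by rewrite ltnn.
by case: ltnP => // ?; rewrite nth_default.
Qed.

Lemma size_row_add_box T r z i : size (nth [::] (add_box T r z) i) =
  if i == r then (size (nth [::] T r)).+1 else size (nth [::] T i).
Proof. by rewrite /add_box nth_set_nth /=; case: eqP => // _; rewrite size_rcons. Qed.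

Lemma in_shape_add_box T r z i j : in_shape (add_box T r z) i j =
  in_shape T i j || (i == r) && (j == size (nth [::] T r)).
Proof.
rewrite /in_shape size_row_add_box; have [-> /=|_] := eqVneq i r; last by rewrite orbF.
by rewrite ltnS leq_eqVlt orbC.
Qed.

Lemma entry_add_box_old T r z i j : in_shape T i j -> entry (add_box T r z) i j = entry T i j.
Proof. by rewrite entry_add_box; case: eqP => //= -> /ltn_eqF ->. Qed.

Lemma in_shape_add_box_new T r z i j : in_shape (add_box T r z) i j -> ~~ in_shape T i j ->
  i = r /\ j = size (nth [::] T r).
Proof. by rewrite in_shape_add_box => /orP [-> //|/andP [/eqP -> /eqP ->]]. Qed.

(* An spo-tableau without the bounds on its entries: insertion without
   cancellation never uses those bounds. *)
Record spo_ordered (T : tableau) : Prop := SpoOrdered {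
  ordered_shape : forall i, size (nth [::] T i.+1) <= size (nth [::] T i);
  ordered_row : forall i j, in_shape T i j.+1 -> row_next (entry T i j) (entry T i j.+1);
  ordered_col : forall i j, in_shape T i.+1 j -> col_next (entry T i j) (entry T i.+1 j)
}.

Lemma spo_tableau_ordered m n T : spo_tableau m n T -> spo_ordered T.
Proof.
move=> [_ [shT [_ [_ [_ [rowB0 [colB0 [_ [rowB1 colB1]]]]]]]]]; split=> // i j inT.
- rewrite /row_next; case: ifPn => [B|/negPf]; last exact: rowB1.
  case: (boolP (isB0 (entry T i j.+1))) => [|B']; first exact: rowB0.
  by apply: ltBW; apply: ltB_B0_B1.
- rewrite /col_next; case: ifPn => [B|/negPf B]; last first.
    case: (boolP (isB0 (entry T i.+1 j))) => [B'|]; last by move=> _; apply: colB1.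
    by rewrite (isB0_leB (ltBW (colB0 _ _ inT B')) B') in B.
  case: (boolP (isB0 (entry T i.+1 j))) => [|B']; first exact: colB0.
  exact: ltB_B0_B1.
Qed.

Lemma ordered_set_entry T r c x : spo_ordered T -> in_shape T r c ->
  (0 < c -> row_next (entry T r c.-1) x) -> (in_shape T r c.+1 -> row_next x (entry T r c.+1)) ->
  (0 < r -> col_next (entry T r.-1 c) x) -> (in_shape T r.+1 c -> col_next x (entry T r.+1 c)) ->
  spo_ordered (set_entry T r c x).
Proof.
case=> shT rowT colT inTrc left right up down; split.
- by move=> i; rewrite !size_row_set.
- move=> i j; rewrite in_shape_set // !entry_set.
  have [-> /=|_] := eqVneq i r; last exact: rowT.
  have [->|_] := eqVneq j c; first by rewrite gtn_eqF //; apply: right.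
  by have [Ec _|_] := eqVneq j.+1 c; [move: left; rewrite -Ec; apply | apply: rowT].
- move=> i j; rewrite in_shape_set // !entry_set.
  have [-> /=|_] := eqVneq j c; last by rewrite !andbF; apply: colT.
  rewrite !andbT; have [->|_] := eqVneq i r; first by rewrite gtn_eqF //; apply: down.
  by have [Er _|_] := eqVneq i.+1 r; [move: up; rewrite -Er; apply | apply: colT].
Qed.

Lemma ordered_add_box T r z : spo_ordered T ->
  (0 < r -> size (nth [::] T r) < size (nth [::] T r.-1)) ->
  (0 < size (nth [::] T r) -> row_next (entry T r (size (nth [::] T r)).-1) z) ->
  (0 < r -> col_next (entry T r.-1 (size (nth [::] T r))) z) ->
  spo_ordered (add_box T r z).
Proof.
case=> shT rowT colT grow left up; set s := size (nth [::] T r) in grow left up.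
have below : size (nth [::] T r.+1) <= s by apply: shT.
split.
- move=> i; rewrite !size_row_add_box -/s.
  have [Er|_] := eqVneq i.+1 r; first by move: grow; rewrite -Er ltn_eqF //; apply.
  by have [->|_] := eqVneq i r; [apply: leqW | apply: shT].
- move=> i j; rewrite in_shape_add_box !entry_add_box -/s.
  have [-> /=|_] := eqVneq i r; last by rewrite orbF; apply: rowT.
  have [->|_] := eqVneq j s; first by rewrite gtn_eqF // orbF /in_shape ltnNge leqnSn.
  have [Es _|_] := eqVneq j.+1 s; last by rewrite orbF; apply: rowT.
  by move: left; rewrite -Es; apply.
- move=> i j; rewrite in_shape_add_box !entry_add_box -/s.
  have [-> /=|_] := eqVneq j s; last by rewrite !andbF orbF; apply: colT.
  rewrite !andbT; have [->|_] := eqVneq i r.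
    by rewrite gtn_eqF // orbF /in_shape ltnNge below.
  have [Er _|_] := eqVneq i.+1 r; last by rewrite orbF; apply: colT.
  by move: up; rewrite -Er; apply.
Qed.

Section Monotonicity.
Variable T : tableau.
Hypothesis ordT : spo_ordered T.

Lemma size_row_mono i i' : i <= i' -> size (nth [::] T i') <= size (nth [::] T i).
Proof.
apply: (@homo_leq _ (fun i => size (nth [::] T i)) (fun a b => b <= a)) => //.
- by move=> y x z lexy leyz; apply: leq_trans leyz lexy.
- exact: ordered_shape.
Qed.

Lemma in_shape_up i i' j : i <= i' -> in_shape T i' j -> in_shape T i j.
Proof. by move=> lei /leq_trans; apply; apply: size_row_mono. Qed.

Lemma in_shape_left i j j' : j <= j' -> in_shape T i j' -> in_shape T i j.
Proof. exact: leq_ltn_trans. Qed.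

Lemma row_mono i j j' : j <= j' -> in_shape T i j' -> leB (entry T i j) (entry T i j').
Proof.
move=> /subnKC <-; elim: (j' - j) => [|d IH]; first by rewrite addn0 leB_refl.
rewrite addnS => inT; apply: leB_trans (IH (in_shape_left (leqnSn _) inT)) _.
exact/row_next_leB/(ordered_row ordT).
Qed.

Lemma col_mono i i' j : i <= i' -> in_shape T i' j -> leB (entry T i j) (entry T i' j).
Proof.
move=> /subnKC <-; elim: (i' - i) => [|d IH]; first by rewrite addn0 leB_refl.
rewrite addnS => inT; apply: leB_trans (IH (in_shape_up (leqnSn _) inT)) _.
exact/col_next_leB/(ordered_col ordT).
Qed.

End Monotonicity.

Lemma B1_below_B0 T i i' j : spo_ordered T -> in_shape T i' j -> isB0 (entry T i' j) ->
  ~~ isB0 (entry T i j) -> i' < i.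
Proof.
move=> ordT ini' B0 B1; rewrite ltnNge; apply: contra B1 => le.
exact: isB0_leB (col_mono ordT le ini') B0.
Qed.

Lemma find_ltB z (s : seq letter) (i := find (ltB z) s) : has (ltB z) s ->
  [/\ i < size s, ltB z (nth dummy s i) & forall i', i' < i -> leB (nth dummy s i') z].
Proof.
move=> hasz; split; [by rewrite -has_find | exact: nth_find |].
by move=> i' /(before_find dummy); rewrite leBNgt => ->.
Qed.

Lemma hasN_ltB z (s : seq letter) i : ~~ has (ltB z) s -> i < size s -> leB (nth dummy s i) z.
Proof. by move=> /hasPn noz lti; rewrite leBNgt noz // mem_nth. Qed.

Definition col_height (T : tableau) (j : nat) : nat := find (fun row : seq letter => size row <= j) T.
Definition column (T : tableau) (j : nat) : seq letter := [seq entry T i j | i <- iota 0 (col_height T j)].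

Lemma size_column T j : size (column T j) = col_height T j.
Proof. by rewrite size_map size_iota. Qed.

Lemma nth_column T j i : i < col_height T j -> nth dummy (column T j) i = entry T i j.
Proof. by move=> lti; rewrite (nth_map 0) ?size_iota // nth_iota. Qed.

Lemma col_height_shape T j i : spo_ordered T -> (i < col_height T j) = in_shape T i j.
Proof.
move=> ordT; rewrite /col_height /in_shape; case: ltnP => lti.
  by have := before_find [::] lti; rewrite /= ltnNge => ->.
apply/esym/negbTE; rewrite -leqNgt.
have [ltT|leT] := ltnP (col_height T j) (size T); last by rewrite nth_default ?(leq_trans leT).
have short : size (nth [::] T (col_height T j)) <= j.
  by apply: (nth_find [::] (a := fun row : seq letter => size row <= j)); rewrite has_find.
exact: leq_trans (size_row_mono ordT lti) short.
Qed.

Lemma col_height_eq T T' j : size T' = size T ->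
  (forall i, size (nth [::] T' i) = size (nth [::] T i)) -> col_height T' j = col_height T j.
Proof.
move=> eqsz eqrow; rewrite /col_height -!(find_map size (fun s => s <= j)); congr find.
by apply: (@eq_from_nth _ 0); rewrite !size_map // => i lti; rewrite !(nth_map [::]) // -eqsz.
Qed.

(** * The bumping path of the first insertion *)

Definition shape_sub (T U : tableau) : Prop := forall i j, in_shape T i j -> in_shape U i j.

Definition B0_kept (T U : tableau) (i j : nat) : Prop :=
  entry U i j = entry T i j \/ ~~ isB0 (entry U i j) /\ ~~ isB0 (entry T i j).

Lemma B0_kept_eq T U i j : B0_kept T U i j -> isB0 (entry T i j) || isB0 (entry U i j) ->
  entry U i j = entry T i j.
Proof. by case=> [-> //|[/negPf -> /negPf ->]]. Qed.

Definition new_box (T U : tableau) (r c : nat) : Prop :=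
  [/\ forall i j, in_shape U i j -> ~~ in_shape T i j -> i = r /\ j = c,
      size (nth [::] U r) = c.+1 & size (nth [::] T r) = c].

Lemma shape_sub_add_box T r z : shape_sub T (add_box T r z).
Proof. by move=> i j inT; rewrite in_shape_add_box inT. Qed.

Lemma new_box_add_box T r z : new_box T (add_box T r z) r (size (nth [::] T r)).
Proof. by split; [apply: in_shape_add_box_new | rewrite size_row_add_box eqxx |]. Qed.

Lemma shape_sub_set T U r c x : in_shape T r c ->
  shape_sub (set_entry T r c x) U -> shape_sub T U.
Proof. by move=> inrc sub i j inij; apply: sub; rewrite in_shape_set. Qed.

Lemma new_box_set T U r c x i j : in_shape T r c ->
  new_box (set_entry T r c x) U i j -> new_box T U i j.
Proof.
move=> inrc [only sizeU sizeT]; split=> //; last by rewrite -sizeT size_row_set.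
by move=> i' j' inU; rewrite -(in_shape_set x _ _ inrc); apply: only.
Qed.

Lemma new_box_col_le T U r c i j : new_box T U r c ->
  in_shape U i j -> j <= size (nth [::] T i).
Proof.
move=> [only _ sizeT] inU; case: (boolP (in_shape T i j)) => [/ltnW //|notT].
by have [-> ->] := only _ _ inU notT; rewrite sizeT.
Qed.

(* The column phase of an insertion leaves its bumped B_1 letters at the boxes
   [(rho j', j')], [j <= j' <= f]. *)
Record col_path (U : tableau) (j f : nat) (rho : nat -> nat) : Prop := ColPath {
  col_path_box : forall j', j <= j' <= f ->
    in_shape U (rho j') j' /\ ~~ isB0 (entry U (rho j') j');
  col_path_incr : forall j', j <= j' < f ->
    ltB (entry U (rho j') j') (entry U (rho j'.+1) j'.+1)
}.

(* [w] has just been displaced from the box [(q, j.-1)] by a smaller letter. *)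
Definition col_start (T : tableau) (j : nat) (w : letter) : Prop :=
  0 < j /\ exists q, [/\ in_shape T q j.-1, ltB (entry T q j.-1) w
                       & in_shape T q j -> ltB w (entry T q j)].

Lemma col_start_bound T j w s : spo_ordered T -> col_start T j w ->
  s <= col_height T j -> (forall i, i < s -> leB (entry T i j) w) ->
  in_shape T s j.-1 /\ ltB (entry T s j.-1) w.
Proof.
move=> ordT [_ [q [inq ltq right]]] les above.
have leqs : s <= q.
  rewrite leqNgt; apply/negP => ltqs.
  have inqj : in_shape T q j by rewrite -col_height_shape // (leq_trans ltqs les).
  by move: (above q ltqs); rewrite leBNgt right.
split; first exact: in_shape_up inq.
exact: leB_ltB_trans (col_mono ordT leqs inq) ltq.
Qed.

Lemma col_start_bump T r d z : spo_ordered T -> in_shape T r d ->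
  ltB z (entry T r d) -> ~~ isB0 (entry T r d) ->
  col_start (set_entry T r d z) d.+1 (entry T r d).
Proof.
move=> ordT ind ltz Bd; split=> //; exists r.
rewrite /= !in_shape_set // !entry_set !eqxx (gtn_eqF (ltnSn d)) /=; split=> // inr.
by have := ordered_row ordT inr; rewrite /row_next (negPf Bd).
Qed.

Lemma ordered_col_bump T j w s : spo_ordered T -> ~~ isB0 w -> col_start T j w ->
  in_shape T s j -> ltB w (entry T s j) -> (forall i, i < s -> leB (entry T i j) w) ->
  spo_ordered (set_entry T s j w).
Proof.
move=> ordT Bw start ins lts above.
have les : s <= col_height T j by rewrite ltnW // col_height_shape.
have [_ ltleft] := col_start_bound ordT start les above.
have Bs : ~~ isB0 (entry T s j) := isB1_leB (ltBW lts) Bw.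
apply: ordered_set_entry => //.
- by move=> _; apply: ltB_row_next.
- move=> inr; apply/ltB_row_next/(ltB_trans lts).
  by have := ordered_row ordT inr; rewrite /row_next (negPf Bs).
- by move=> s_gt0; apply: col_next_B1 => //; apply: above; rewrite ltn_predL.
- move=> inb; apply/ltB_col_next/(ltB_leB_trans lts).
  exact: col_next_leB (ordered_col ordT inb).
Qed.

Record col_spec (T U : tableau) (j f : nat) (rho : nat -> nat) (w : letter) : Prop := ColSpec {
  col_spec_ordered : spo_ordered U;
  col_spec_shape : shape_sub T U;
  col_spec_kept : forall i k, in_shape T i k -> B0_kept T U i k;
  col_spec_left : forall i k, k < j -> in_shape T i k -> entry U i k = entry T i k;
  col_spec_le : j <= f;
  col_spec_first : entry U (rho j) j = w;
  col_spec_path : col_path U j f rho;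
  col_spec_new : new_box T U (rho f) f
}.

Lemma col_spec_place T j w (h := col_height T j) : spo_ordered T -> ~~ isB0 w ->
  col_start T j w -> ~~ has (ltB w) (column T j) ->
  col_spec T (add_box T h w) j j (fun _ => h) w.
Proof.
move=> ordT Bw start nohas; have j_gt0 := start.1.
have above i : i < h -> leB (entry T i j) w.
  by move=> lti; rewrite -nth_column //; apply: hasN_ltB; rewrite ?size_column.
have [inleft ltleft] := col_start_bound ordT start (leqnn h) above.
have sizeh : size (nth [::] T h) = j.
  apply/eqP; rewrite eqn_leq leqNgt -/(in_shape T h j) -col_height_shape // ltnn /=.
  by move: inleft; rewrite /in_shape prednK.
split=> //.
- apply: ordered_add_box => //; rewrite sizeh.
  + by move=> h_gt0; rewrite -/(in_shape T h.-1 j) -col_height_shape // ltn_predL.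
  + by move=> _; apply: ltB_row_next.
  + by move=> h_gt0; apply: col_next_B1 => //; apply: above; rewrite ltn_predL.
- exact: shape_sub_add_box.
- by move=> i k /entry_add_box_old; left.
- by move=> i k _ /entry_add_box_old.
- by rewrite entry_add_box sizeh !eqxx.
- split=> j' /andP [le1 le2]; last by rewrite ltnNge le1 in le2.
  have -> : j' = j by apply/eqP; rewrite eqn_leq le1 le2.
  by rewrite in_shape_add_box entry_add_box sizeh !eqxx orbT.
- by rewrite -sizeh; apply: new_box_add_box.
Qed.

Lemma col_spec_bump T U j s w f rho : in_shape T s j -> ltB w (entry T s j) -> ~~ isB0 w ->
  col_spec (set_entry T s j w) U j.+1 f rho (entry T s j) ->
  col_spec T U j f (fun j' => if j' == j then s else rho j') w.
Proof.
move=> ins lts Bw [ordU shU keep left lef first [pbox pincr] new].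
have Bs := isB1_leB (ltBW lts) Bw.
have Us : entry U s j = w by rewrite left ?in_shape_set // entry_set !eqxx.
have ne_j j' : j < j' -> (j' == j) = false by move/gtn_eqF.
split=> //.
- exact: shape_sub_set shU.
- move=> i k ink; have := keep i k; rewrite /B0_kept in_shape_set // entry_set => /(_ ink).
  have [-> | _] //= := eqVneq i s; have [-> _ | _] //= := eqVneq k j.
  by right; rewrite Us.
- move=> i k ltk ink; rewrite left ?in_shape_set ?entry_set ?(ltn_eqF ltk) ?andbF //.
  exact: ltnW.
- exact: ltnW.
- by rewrite eqxx.
- split=> j' /andP [le1 le2].
  + have [-> | ne] := eqVneq j' j; first by rewrite Us shU ?in_shape_set.
    by apply: pbox; rewrite le2 andbT ltn_neqAle eq_sym ne.
  + rewrite (ne_j j'.+1) //; have [-> | ne] := eqVneq j' j; first by rewrite Us first.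
    by apply: pincr; rewrite le2 andbT ltn_neqAle eq_sym ne.
- by rewrite ne_j //; apply: new_box_set new.
Qed.

Lemma col_insertion_spec fuel T j w U : spo_ordered T -> ~~ isB0 w -> col_start T j w ->
  ins fuel T w (Col j) = Placed U -> exists f rho, col_spec T U j f rho w.
Proof.
elim: fuel T j w => // fuel IH T j w ordT Bw start /=.
rewrite -/(col_height T j) -/(column T j).
case: ifP => [hasw | /negbT nohas]; last first.
  by case=> <-; exists j, (fun _ => col_height T j); apply: col_spec_place.
have [lts ltw above] := find_ltB hasw; set s := find _ _ in lts ltw above *.
rewrite size_column in lts; rewrite nth_column // in ltw *.
have ins : in_shape T s j by rewrite -col_height_shape.
have Bs := isB1_leB (ltBW ltw) Bw.
have above' i : i < s -> leB (entry T i j) w.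
  by move=> lti; rewrite -nth_column ?above // (ltn_trans lti).
rewrite (negPf Bs) => /IH [] //.
- exact: ordered_col_bump.
- exact: col_start_bump.
by move=> f [rho spec]; exists f, (fun j' => if j' == j then s else rho j'); apply: col_spec_bump.
Qed.

Lemma ltB_first_le z (s : seq letter) d p :
  (forall c, c < d -> leB (nth dummy s c) z) -> ltB z (nth dummy s p) -> d <= p.
Proof. by move=> below ltp; rewrite leqNgt; apply: contraTN ltp => /below; rewrite leBNgt. Qed.

(* The row phase of an insertion leaves its bumped B_0 letters at the boxes
   [(i, c i)], [r <= i <= k]. *)
Record row_path (U : tableau) (r k : nat) (c : nat -> nat) : Prop := RowPath {
  row_path_box : forall i, r <= i <= k -> in_shape U i (c i) /\ isB0 (entry U i (c i));
  row_path_mono : forall i, r <= i < k -> c i.+1 <= c i;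
  row_path_next : forall i d, r <= i < k -> c i < d -> in_shape U i d -> isB0 (entry U i d) ->
    leB (entry U i.+1 (c i.+1)) (entry U i d);
  row_path_last : forall d, c k < d -> in_shape U k d -> ~~ isB0 (entry U k d)
}.

Lemma row_path_single U r d : in_shape U r d -> isB0 (entry U r d) ->
  (forall d', d < d' -> in_shape U r d' -> ~~ isB0 (entry U r d')) ->
  row_path U r r (fun _ => d).
Proof.
move=> ind Bd last; split=> // [i|i d'] /andP [le1 le2];
  last by rewrite ltnNge le1 in le2.
by have -> : i = r by apply/eqP; rewrite eqn_leq le2 le1.
Qed.

Lemma row_path_cons U r k d c : r < k -> row_path U r.+1 k c ->
  in_shape U r d -> isB0 (entry U r d) -> c r.+1 <= d ->
  (forall d', d < d' -> in_shape U r d' -> isB0 (entry U r d') ->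
     leB (entry U r.+1 (c r.+1)) (entry U r d')) ->
  row_path U r k (fun i => if i == r then d else c i).
Proof.
move=> ltrk [box mono next last] ind Bd led nextr.
have ne_r i : r < i -> (i == r) = false by move/gtn_eqF.
split.
- move=> i /andP [le1 le2]; have [-> //|ne] := eqVneq i r.
  by apply: box; rewrite le2 andbT ltn_neqAle eq_sym ne.
- move=> i /andP [le1 le2]; rewrite (ne_r i.+1) ?ltnS //; have [-> //|ne] := eqVneq i r.
  by apply: mono; rewrite le2 andbT ltn_neqAle eq_sym ne.
- move=> i d' /andP [le1 le2]; rewrite (ne_r i.+1) ?ltnS //.
  have [->|ne] := eqVneq i r; first exact: nextr.
  by apply: next; rewrite le2 andbT ltn_neqAle eq_sym ne.
- by rewrite (ne_r k).
Qed.

Lemma row_path_le U r k c i : row_path U r k c -> r <= i <= k -> c k <= c i.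
Proof.
move=> path /andP [lri lik].
have le_t t : i + t <= k -> c (i + t) <= c i.
  elim: t => [|t IH] le; first by rewrite addn0.
  rewrite addnS in le *; apply: leq_trans (IH (ltnW le)).
  by apply: (row_path_mono path); rewrite le (leq_trans lri (leq_addr _ _)).
by have := le_t (k - i); rewrite subnKC //; apply.
Qed.

Definition path_end (U : tableau) (k : nat) (c rho : nat -> nat) (r1 c1 : nat) : Prop :=
  r1 = k /\ c1 = c k \/ [/\ c k < c1, r1 = rho c1 & col_path U (c k).+1 c1 rho].

Lemma path_end_B1 U k c rho r1 c1 : path_end U k c rho r1 c1 -> r1 != k ->
  ~~ isB0 (entry U r1 c1).
Proof.
case=> [[-> _]|[ltc -> [box _]] _]; first by rewrite eqxx.
by apply: (box c1 _).2; rewrite ltc leqnn.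
Qed.

(* [z] has just been displaced from the box [(r.-1, p)] by a smaller letter. *)
Definition row_start (T : tableau) (r : nat) (z : letter) : Prop :=
  0 < r -> exists p, [/\ p < size (nth [::] T r.-1),
                         forall c, c <= p -> ltB (entry T r.-1 c) z
                       & in_shape T r p -> ltB z (entry T r p)].

Lemma row_start_bound T r z d : row_start T r z -> d <= size (nth [::] T r) ->
  (forall c, c < d -> leB (entry T r c) z) -> 0 < r ->
  d < size (nth [::] T r.-1) /\ ltB (entry T r.-1 d) z.
Proof.
move=> start led below /start [p [ltp left right]].
have ledp : d <= p.
  rewrite leqNgt; apply/negP => ltpd.
  by move: (below p ltpd); rewrite leBNgt right // /in_shape (leq_trans ltpd led).
by split; [apply: leq_ltn_trans ltp | apply: left].
Qed.

Lemma row_start_bump T r d z : spo_ordered T -> in_shape T r d -> ltB z (entry T r d) ->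
  isB0 (entry T r d) -> (forall c, c < d -> leB (entry T r c) z) ->
  row_start (set_entry T r d z) r.+1 (entry T r d).
Proof.
move=> ordT ind ltd Bd below _; exists d; rewrite /= size_row_set //; split=> // [c led|inb].
  rewrite entry_set eqxx /=; have [// |ne] := eqVneq c d.
  by apply: leB_ltB_trans ltd; apply: below; rewrite ltn_neqAle ne led.
rewrite in_shape_set // in inb; rewrite !entry_set !eqxx (gtn_eqF (ltnSn r)) /=.
by have := ordered_col ordT inb; rewrite /col_next Bd.
Qed.

Lemma ordered_row_bump T r z d : spo_ordered T -> isB0 z -> row_start T r z ->
  in_shape T r d -> ltB z (entry T r d) -> (forall c, c < d -> leB (entry T r c) z) ->
  spo_ordered (set_entry T r d z).
Proof.
move=> ordT Bz start ind ltd below.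
apply: ordered_set_entry => //.
- by move=> d_gt0; apply: row_next_B0 => //; apply: below; rewrite ltn_predL.
- move=> inr; rewrite /row_next Bz; apply/ltBW/(ltB_leB_trans ltd).
  exact: row_next_leB (ordered_row ordT inr).
- by move=> r_gt0; apply/ltB_col_next; exact: (row_start_bound start (ltnW ind) below r_gt0).2.
- move=> inb; apply/ltB_col_next/(ltB_leB_trans ltd).
  exact: col_next_leB (ordered_col ordT inb).
Qed.

Record row_spec (T U : tableau) (r k : nat) (c rho : nat -> nat) (r1 c1 : nat) (z : letter) :
    Prop := RowSpec {
  row_spec_ordered : spo_ordered U;
  row_spec_shape : shape_sub T U;
  row_spec_kept : forall i j, i < r -> in_shape T i j -> B0_kept T U i j;
  row_spec_le : r <= k;
  row_spec_new : new_box T U r1 c1;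
  row_spec_first : entry U r (c r) = z;
  row_spec_first_min : forall p, in_shape T r p -> ltB z (entry T r p) -> c r <= p;
  row_spec_path : row_path U r k c;
  row_spec_end : path_end U k c rho r1 c1
}.

Lemma row_spec_place T r z (s := size (nth [::] T r)) : spo_ordered T -> isB0 z ->
  row_start T r z -> ~~ has (ltB z) (nth [::] T r) ->
  row_spec T (add_box T r z) r r (fun _ => s) (fun _ => 0) r s z.
Proof.
move=> ordT Bz start nohas.
have below c : c < s -> leB (entry T r c) z by apply: hasN_ltB.
have Ur : entry (add_box T r z) r s = z by rewrite entry_add_box !eqxx.
have inUr : in_shape (add_box T r z) r s by rewrite in_shape_add_box !eqxx orbT.
split=> //.
- apply: ordered_add_box => //.
  + by move=> r_gt0; exact: (row_start_bound start (leqnn s) below r_gt0).1.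
  + by move=> s_gt0; apply: row_next_B0 => //; apply: below; rewrite ltn_predL.
  + by move=> r_gt0; apply/ltB_col_next; exact: (row_start_bound start (leqnn s) below r_gt0).2.
- exact: shape_sub_add_box.
- by move=> i k _ /entry_add_box_old; left.
- exact: new_box_add_box.
- by move=> p inp; rewrite ltBNge below.
- apply: row_path_single; rewrite ?Ur //.
  by move=> d ltd; rewrite /in_shape size_row_add_box eqxx ltnS leqNgt ltd.
- by left.
Qed.

Lemma row_spec_bump_row T U r d z k c rho r1 c1 : spo_ordered T ->
  in_shape T r d -> ltB z (entry T r d) -> (forall c', c' < d -> leB (entry T r c') z) ->
  isB0 (entry T r d) ->
  row_spec (set_entry T r d z) U r.+1 k c rho r1 c1 (entry T r d) ->
  row_spec T U r k (fun i => if i == r then d else c i) rho r1 c1 z.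
Proof.
move=> ordT ind ltd below Bd [ordU shU keep ltrk new first fmin path pend].
have T'r j : entry (set_entry T r d z) r j = if j == d then z else entry T r j.
  by rewrite entry_set eqxx.
have Ur : entry U r d = z.
  rewrite (B0_kept_eq (keep r d (ltnSn r) _)) ?in_shape_set ?T'r ?eqxx //=.
  by rewrite (isB0_leB (ltBW ltd) Bd).
have inU := shape_sub_set ind shU.
have lecd : c r.+1 <= d.
  case: (boolP (in_shape T r.+1 d)) => [inb|outb].
    apply: fmin; rewrite ?in_shape_set // entry_set (gtn_eqF (ltnSn r)) /=.
    by have := ordered_col ordT inb; rewrite /col_next Bd.
  have [inc _] : in_shape U r.+1 (c r.+1) /\ isB0 (entry U r.+1 (c r.+1)).
    by apply: (row_path_box path); rewrite ltnSn.
  apply: leq_trans (new_box_col_le new inc) _.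
  by rewrite size_row_set // leqNgt.
have nextr d' : d < d' -> in_shape U r d' -> isB0 (entry U r d') ->
    leB (entry U r.+1 (c r.+1)) (entry U r d').
  move=> ltd' inU' B'; rewrite first; case: (boolP (in_shape T r d')) => [inT'|outT].
    rewrite (B0_kept_eq (keep r d' (ltnSn r) _)) ?in_shape_set ?B' ?orbT // T'r (gtn_eqF ltd').
    exact: row_mono (ltnW ltd') inT'.
  have [er ec] : r = r1 /\ d' = c1 by case: new => only _ _; apply: only; rewrite ?in_shape_set.
  by have := path_end_B1 pend; rewrite -er -ec (ltn_eqF ltrk) B' => /(_ isT).
split=> //.
- by move=> i j lti inij; have := keep i j (ltnW lti); rewrite /B0_kept in_shape_set //
    entry_set (ltn_eqF lti) => /(_ inij).
- exact: ltnW.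
- exact: new_box_set new.
- by rewrite eqxx Ur.
- by move=> p inp; rewrite eqxx; apply: ltB_first_le.
- apply: row_path_cons => //; first exact: inU.
  by rewrite Ur (isB0_leB (ltBW ltd) Bd).
- by rewrite /path_end (gtn_eqF ltrk).
Qed.

Lemma row_spec_bump_col T U r d z f rho : spo_ordered T -> isB0 z ->
  in_shape T r d -> ltB z (entry T r d) -> (forall c', c' < d -> leB (entry T r c') z) ->
  ~~ isB0 (entry T r d) ->
  col_spec (set_entry T r d z) U d.+1 f rho (entry T r d) ->
  row_spec T U r r (fun _ => d) rho (rho f) f z.
Proof.
move=> ordT Bz ind ltd below Bd [ordU shU keep left ledf _ path new].
have Ur : entry U r d = z by rewrite left ?in_shape_set // entry_set !eqxx.
split=> //.
- exact: shape_sub_set shU.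
- by move=> i j lti inij; have := keep i j; rewrite /B0_kept in_shape_set //
    entry_set (ltn_eqF lti) => /(_ inij).
- exact: new_box_set new.
- by move=> p inp; apply: ltB_first_le.
- apply: row_path_single; rewrite ?Ur ?(shape_sub_set ind shU) //.
  move=> d' ltd' inU'; case: (boolP (in_shape T r d')) => [inT'|outT].
    have := keep r d'; rewrite /B0_kept in_shape_set // entry_set eqxx (gtn_eqF ltd') /=.
    case/(_ inT') => [->|[] //]; apply: isB1_leB Bd; exact: row_mono (ltnW ltd') inT'.
  have [-> ->] : r = rho f /\ d' = f by case: new => only _ _; apply: only; rewrite ?in_shape_set.
  by apply: (col_path_box path _).2; rewrite ledf leqnn.
- by right.
Qed.

Lemma row_insertion_spec fuel T r z U : spo_ordered T -> isB0 z -> row_start T r z ->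
  ins fuel T z (Row r) = Placed U -> exists k c rho r1 c1, row_spec T U r k c rho r1 c1 z.
Proof.
elim: fuel T r z => // fuel IH T r z ordT Bz start /=.
case: ifP => [hasz | /negbT nohas]; last first.
  by case=> <-; do 5 eexists; apply: row_spec_place.
have [ltd ltz below] := find_ltB hasz; set d := find _ _ in ltd ltz below *.
rewrite -/(entry T r d) in ltz *; case: ifP => _; first by case: jdt.
have ordT' := ordered_row_bump ordT Bz start ltd ltz below.
case: ifP => Bd.
  case/IH => // [|k [c [rho [r1 [c1 spec]]]]]; first exact: row_start_bump.
  by exists k, (fun i => if i == r then d else c i), rho, r1, c1; apply: row_spec_bump_row.
move/negbT: Bd => Bd /col_insertion_spec.
case=> // [|f [rho spec]]; first exact: col_start_bump.
by exists r, (fun _ => d), rho, (rho f), f; apply: row_spec_bump_col.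
Qed.

(** * The second insertion stays right of the first *)

Definition same_shape (V U : tableau) : Prop :=
  size V = size U /\ forall i, size (nth [::] V i) = size (nth [::] U i).

Lemma in_shape_same V U i j : same_shape V U -> in_shape V i j = in_shape U i j.
Proof. by case=> _ eqrow; rewrite /in_shape eqrow. Qed.

Lemma same_shape_set V U r d x : same_shape V U -> in_shape V r d ->
  same_shape (set_entry V r d x) U.
Proof. by case=> eqsz eqrow ind; split=> [|i]; rewrite ?size_set ?size_row_set. Qed.

Definition B1_kept (U V : tableau) (i j : nat) : Prop :=
  entry V i j = entry U i j \/ isB0 (entry V i j) /\ isB0 (entry U i j).

Lemma B1_kept_eq U V i j : B1_kept U V i j -> ~~ isB0 (entry V i j) || ~~ isB0 (entry U i j) ->
  entry V i j = entry U i j.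
Proof. by case=> [-> //|[-> ->]]. Qed.

Section SecondInsertion.

Variables (U : tableau) (k : nat) (c rho : nat -> nat) (r1 c1 : nat).
Hypotheses (ordU : spo_ordered U) (path : row_path U 0 k c)
  (pend : path_end U k c rho r1 c1) (size_r1 : size (nth [::] U r1) = c1.+1).

(* In its row phase, at row [r], the second insertion carries a letter [y]
   not smaller than the one the first insertion left in row [r]; row [r.-1]
   holds only B_0 letters up to the column [e] from which [y] was bumped. *)
Record row_phase (V : tableau) (y : letter) (r : nat) : Prop := RowPhase {
  row_phase_shape : same_shape V U;
  row_phase_B0 : isB0 y;
  row_phase_le : r <= k;
  row_phase_route : leB (entry U r (c r)) y;
  row_phase_below : forall i, r <= i -> nth [::] V i = nth [::] U i;
  row_phase_kept : forall i j, B1_kept U V i j;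
  row_phase_start : 0 < r -> exists e,
    (forall j, j <= e -> in_shape U r.-1 j /\ isB0 (entry U r.-1 j)) /\
    (in_shape U r e -> ltB y (entry U r e))
}.

(* In its column phase, at column [j], the second insertion is either already
   right of the new box of [U], or [y] is smaller than the letter the first
   insertion placed in column [j]. *)
Record col_phase (V : tableau) (y : letter) (j : nat) : Prop := ColPhase {
  col_phase_shape : same_shape V U;
  col_phase_B1 : ~~ isB0 y;
  col_phase_pos : 0 < j;
  col_phase_kept : forall i j', j <= j' -> B1_kept U V i j';
  col_phase_start : exists q, in_shape U q j.-1 /\ (in_shape U q j -> ltB y (entry V q j));
  col_phase_right : c1 < j \/ c k < j <= c1 /\ ltB y (entry U (rho j) j)
}.

Lemma row_phase_find_gt V y r d : row_phase V y r ->
  in_shape U r d -> ltB y (entry U r d) -> c r < d.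
Proof.
case=> _ _ lerk route _ _ _ ind ltd; rewrite ltnNge; apply: contraTN ltd => ledc.
have [inc _] := row_path_box path (i := r) lerk.
by rewrite -leBNgt; apply: leB_trans (row_mono ordU ledc inc) route.
Qed.

Lemma row_phase_B0_above V y r d : row_phase V y r -> 0 < r ->
  d <= size (nth [::] U r) -> (forall j, j < d -> leB (entry U r j) y) ->
  forall j, j <= d -> in_shape U r.-1 j /\ isB0 (entry U r.-1 j).
Proof.
case=> _ _ _ _ _ _ start /start [e [above right]] led below j lejd.
apply: above; apply: leq_trans lejd _; rewrite leqNgt; apply/negP => lted.
have ine : in_shape U r e by apply: leq_trans led.
by move: (below e lted); rewrite leBNgt right.
Qed.

Lemma row_phase_init y : isB0 y -> leB (entry U 0 (c 0)) y -> row_phase U y 0.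
Proof. by move=> By route; split=> // i j; left. Qed.

Lemma row_phase_bump_row V y r d : row_phase V y r ->
  in_shape U r d -> ltB y (entry U r d) -> (forall j, j < d -> leB (entry U r j) y) ->
  isB0 (entry U r d) -> row_phase (set_entry V r d y) (entry U r d) r.+1.
Proof.
move=> ph ind ltd below Bd; have gtd := row_phase_find_gt ph ind ltd.
case: ph => shape By lerk _ unchanged kept _.
have inV : in_shape V r d by rewrite /in_shape unchanged.
have ltrk : r < k.
  rewrite ltn_neqAle lerk andbT; apply: contraTneq Bd => erk.
  by rewrite erk in gtd ind *; apply: (row_path_last path).
split=> //.
- exact: same_shape_set.
- exact: (row_path_next path).
- move=> i lti; rewrite /set_entry nth_set_nth /= (gtn_eqF lti).
  exact: unchanged (ltnW lti).
- move=> i j; rewrite /B1_kept entry_set.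
  by case: ifP => [/andP [/eqP -> /eqP ->]|_]; [right | exact: kept].
- move=> _; exists d; split=> [j lejd|inb].
    split; first exact: in_shape_left lejd ind.
    have [-> //|ne] := eqVneq j d.
    by apply: isB0_leB By; apply: below; rewrite ltn_neqAle ne.
  by have := ordered_col ordU inb; rewrite /col_next Bd.
Qed.

Lemma row_phase_bump_col V y r d : row_phase V y r ->
  in_shape U r d -> ltB y (entry U r d) -> (forall j, j < d -> leB (entry U r j) y) ->
  ~~ isB0 (entry U r d) -> col_phase (set_entry V r d y) (entry U r d) d.+1.
Proof.
move=> ph ind ltd below Bd; have gtd := row_phase_find_gt ph ind ltd.
have ckd : c k < d := leq_ltn_trans (row_path_le path (row_phase_le ph)) gtd.
case: (ph) => shape _ _ _ unchanged kept _.
have Vr : nth [::] V r = nth [::] U r := unchanged r (leqnn r).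
have inV : in_shape V r d by rewrite /in_shape Vr.
split=> //.
- exact: same_shape_set.
- by move=> i j' ltj; rewrite /B1_kept entry_set (gtn_eqF ltj) andbF; apply: kept.
- exists r; split=> // inr; rewrite entry_set eqxx (gtn_eqF (ltnSn d)) /= /entry Vr.
  by have := ordered_row ordU inr; rewrite /row_next (negPf Bd).
- case: (ltnP c1 d.+1) => [|led1]; [by left | right].
  case: pend => [[_ ec1]|[_ _ [pbox pincr]]]; first by lia.
  split; first by rewrite ltnS (ltnW ckd).
  have [inrho Brho] : in_shape U (rho d) d /\ ~~ isB0 (entry U (rho d) d).
    by apply: pbox; rewrite ckd ltnW.
  have ler : r <= rho d.
    have [-> //|r_gt0] := posnP r.
    have [inab Bab] := row_phase_B0_above ph r_gt0 (ltnW ind) below (leqnn d).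
    by rewrite -(prednK r_gt0); apply: B1_below_B0 ordU inab Bab Brho.
  apply: leB_ltB_trans (pincr d _); last by rewrite ckd.
  exact: (col_mono ordU ler inrho).
Qed.

Lemma row_phase_place_right V y r : row_phase V y r -> ~~ has (ltB y) (nth [::] U r) ->
  c1 < size (nth [::] U r) /\ r <= r1.
Proof.
move=> ph nohas; set s := size (nth [::] U r).
have below j : j < s -> leB (entry U r j) y by apply: hasN_ltB.
have lerk := row_phase_le ph.
have [inc _] := row_path_box path (i := r) lerk.
have lecr : c k <= c r := row_path_le path lerk.
case: pend => [[-> ->]|[ltc1 er1 [pbox _]]]; first by split=> //; apply: leq_ltn_trans lecr inc.
have step j : c k < j <= c1 -> j <= s -> r < rho j /\ j < s.
  move=> jrange les; have [inrho Brho] := pbox j jrange.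
  have ler : r <= rho j.
    have [-> //|r_gt0] := posnP r.
    have [inab Bab] := row_phase_B0_above ph r_gt0 (leqnn s) below les.
    by rewrite -(prednK r_gt0); apply: B1_below_B0 ordU inab Bab Brho.
  have ltr : r < rho j.
    rewrite ltn_neqAle ler andbT; apply: contraNneq Brho => er.
    by rewrite -er in inrho *; apply: isB0_leB (below j inrho) (row_phase_B0 ph).
  by split=> //; apply: (in_shape_up ordU (ltnW ltr) inrho).
have walk j : c k < j <= c1 -> r < rho j /\ j < s.
  elim: j => [|j IH] /andP [ltj lej]; first by rewrite ltn0 in ltj.
  apply: step; first by rewrite ltj.
  have [<-|ne] := eqVneq (c k) j; first exact: leq_ltn_trans lecr inc.
  by apply: (IH _).2; rewrite ltn_neqAle ne -ltnS ltj (ltnW lej).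
have [ltr lts] : r < rho c1 /\ c1 < s by apply: walk; rewrite ltc1 leqnn.
by rewrite er1; split=> //; apply: ltnW.
Qed.

Lemma row_phase_place V y r : row_phase V y r -> ~~ has (ltB y) (nth [::] U r) ->
  forall r2 c2, in_shape (add_box V r y) r2 c2 -> ~~ in_shape U r2 c2 -> c1 < c2 /\ r2 <= r1.
Proof.
move=> ph nohas r2 c2 inW; rewrite -(in_shape_same _ _ (row_phase_shape ph)).
move=> /(in_shape_add_box_new inW) [-> ->].
by rewrite (row_phase_below ph (leqnn r)); apply: (row_phase_place_right ph nohas).
Qed.

Lemma col_phase_bump V y j s : col_phase V y j -> in_shape U s j -> ltB y (entry V s j) ->
  (forall i, i < s -> leB (entry V i j) y) -> col_phase (set_entry V s j y) (entry V s j) j.+1.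
Proof.
move=> [shape By _ kept _ pright] ins lts above.
have Bs : ~~ isB0 (entry V s j) := isB1_leB (ltBW lts) By.
have Vs : entry V s j = entry U s j by apply: (B1_kept_eq (kept s j (leqnn j))); rewrite Bs.
have inV : in_shape V s j by rewrite (in_shape_same _ _ shape).
split=> //.
- exact: same_shape_set.
- by move=> i j' ltj; rewrite /B1_kept entry_set (gtn_eqF ltj) andbF; apply: kept (ltnW ltj).
- exists s; split=> // inr; rewrite entry_set eqxx (gtn_eqF (ltnSn j)) /=.
  have ltU : ltB (entry U s j) (entry U s j.+1).
    by have := ordered_row ordU inr; rewrite /row_next -Vs (negPf Bs).
  rewrite Vs (B1_kept_eq (kept s j.+1 (leqnSn j))) //.
  by rewrite (isB1_leB (ltBW ltU)) ?orbT // -Vs.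
- case: (ltnP c1 j.+1) => [|lej]; [by left | right].
  case: pright => [ltc|[/andP [ltj _] ltrho]]; first by lia.
  case: pend => [[_ ec1]|[_ _ [pbox pincr]]]; first by lia.
  split; first by rewrite ltnS (ltnW ltj).
  have [inrho Brho] : in_shape U (rho j) j /\ ~~ isB0 (entry U (rho j) j).
    by apply: pbox; rewrite ltj ltnW.
  have les : s <= rho j.
    rewrite leqNgt; apply/negP => ltr; move: (above _ ltr).
    by rewrite (B1_kept_eq (kept _ _ (leqnn j))) ?Brho ?orbT // leBNgt ltrho.
  rewrite Vs; apply: leB_ltB_trans (pincr j _); last by rewrite ltj.
  exact: (col_mono ordU les inrho).
Qed.

Lemma col_phase_place V y j : col_phase V y j -> ~~ has (ltB y) (column V j) ->
  forall r2 c2, in_shape (add_box V (col_height V j) y) r2 c2 -> ~~ in_shape U r2 c2 ->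
  c1 < c2 /\ r2 <= r1.
Proof.
move=> [shape _ j_gt0 kept [q [inq right]] pright] nohas r2 c2 inW.
rewrite -(in_shape_same _ _ shape) => /(in_shape_add_box_new inW) [-> ->].
have eqh : col_height V j = col_height U j by apply: col_height_eq; case: shape.
have above i : in_shape U i j -> leB (entry V i j) y.
  rewrite -col_height_shape // -eqh => lti.
  by rewrite -nth_column //; apply: hasN_ltB; rewrite ?size_column.
rewrite eqh shape.2; set h := col_height U j.
have leh : h <= q.
  rewrite leqNgt col_height_shape //; apply/negP => inqj.
  by move: (above q inqj); rewrite leBNgt right.
have gejh : j <= size (nth [::] U h).
  by rewrite -(prednK j_gt0); apply: (in_shape_up ordU leh inq).
case: pright => [ltc|[/andP [ltj lej] ltrho]].
  split; first exact: leq_trans ltc gejh.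
  by rewrite leqNgt col_height_shape // /in_shape size_r1 ltnS -ltnNge.
case: pend => [[_ ec1]|[_ _ [pbox _]]]; first by lia.
have [inrho Brho] : in_shape U (rho j) j /\ ~~ isB0 (entry U (rho j) j).
  by apply: pbox; rewrite ltj lej.
by move: (above _ inrho); rewrite (B1_kept_eq (kept _ _ (leqnn j))) ?Brho ?orbT // leBNgt ltrho.
Qed.

Definition phase (V : tableau) (y : letter) (t : target) : Prop :=
  match t with Row r => row_phase V y r | Col j => col_phase V y j end.

Lemma second_insertion_right fuel V y t W : phase V y t -> ins fuel V y t = Placed W ->
  forall r2 c2, in_shape W r2 c2 -> ~~ in_shape U r2 c2 -> c1 < c2 /\ r2 <= r1.
Proof.
elim: fuel V y t => // fuel IH V y [r|j] ph /=.
- rewrite -/(add_box V r y) (row_phase_below ph (leqnn r)).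
  case: ifP => [hasy|/negbT nohas]; last by case=> <-; apply: row_phase_place.
  have [ltd ltyd below] := find_ltB hasy; set d := find _ _ in ltd ltyd below *.
  rewrite -/(entry U r d) in ltyd *; case: ifP => _; first by case: jdt.
  case: ifP => Bd /IH; apply.
    exact: row_phase_bump_row.
  by apply: row_phase_bump_col; rewrite ?Bd.
- rewrite -/(col_height V j) -/(column V j) -/(add_box V (col_height V j) y).
  case: ifP => [hasy|/negbT nohas]; last by case=> <-; apply: col_phase_place.
  have [lts ltys above] := find_ltB hasy; set s := find _ _ in lts ltys above *.
  rewrite size_column in lts; rewrite nth_column // in ltys *.
  have Bs := isB1_leB (ltBW ltys) (col_phase_B1 ph).
  rewrite (negPf Bs) => /IH; apply; apply: col_phase_bump => //.
    have [eqsz eqrow] := col_phase_shape ph.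
    by rewrite -col_height_shape // -(col_height_eq j eqsz eqrow).
  by move=> i lti; rewrite -nth_column ?above // (ltn_trans lti).
Qed.

End SecondInsertion.

Unset Implicit Arguments.

Theorem mainTheorem4 (m n : nat) (T U V : tableau) (x1 x2 : letter) :
  spo_tableau m n T ->
  isB0 x1 -> valid_letter m n x1 ->
  isB0 x2 -> valid_letter m n x2 ->
  leB x1 x2 ->
  row_insert T x1 = Placed U ->
  row_insert U x2 = Placed V ->
  forall r1 c1 r2 c2 : nat,
    in_shape U r1 c1 -> ~~ in_shape T r1 c1 ->
    in_shape V r2 c2 -> ~~ in_shape U r2 c2 ->
    c1 < c2 /\ r2 <= r1.
Proof.
move=> spoT Bx1 _ Bx2 _ le12 insT insU r1 c1 r2 c2 inU1 outT1.
have start : row_start T 0 x1 by [].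
have [k [c [rho [r1' [c1' spec]]]]] :=
  row_insertion_spec (spo_tableau_ordered spoT) Bx1 start insT.
case: spec => ordU _ _ _ [only sizeU _] first _ path pend.
have [-> ->] := only _ _ inU1 outT1.
apply: (second_insertion_right ordU path pend sizeU _ insU).
by apply: (row_phase_init k Bx2); rewrite first.
Qed.
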